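(* Let $G$ be a finite group, $f$ a unitary representation of $G$ on a finite-dimensional Hilbert space $\mathcal H$, and $\rho$ a pure state on $\mathcal H$. Let $0<\epsilon<1$ and $\delta_1,\delta_2>0$. Then $$\log M(\rho,\epsilon)\ \ge\ H_s^{\epsilon-\delta_1-\delta_2}(\mathrm{av}_f[\rho])-\log\frac{1}{\delta_1\delta_2},\qquad \log M(\rho,\epsilon)\ \le\ H_s^{\epsilon+\delta_1+2\delta_2}(\mathrm{av}_f[\rho])+\log\frac{1}{\delta_1\delta_2^2}.$$
   Context: $\mathrm{av}_f[\rho]:=\frac{1}{|G|}\sum_{g\in G}f(g)\rho f(g)^\dagger$. $M(\rho,\epsilon)$ is the number of distinguishable states among $\{f(g)\rho f(g)^\dagger\}_{g\in G}$ with error probability $\epsilon$: the largest integer $N$ for which there exist $g_1,\dots,g_N\in G$ and a POVM $\{\Pi_1,\dots,\Pi_N\}$ with $\frac1N\sum_{i=1}^N\mathrm{tr}\,f(g_i)\rho f(g_i)^\dagger(I-\Pi_i)\le\epsilon$. For a state $\sigma$ and $\epsilon\in\mathbb R$, $H_s^{\epsilon}(\sigma):=\max\{\lambda\in\mathbb R:\mathrm{tr}\,\sigma\{\sigma\ge e^{-\lambda}\}\le\epsilon\}$, where $\{\sigma\ge e^{-\lambda}\}$ is the projection onto the span of eigenvectors of $\sigma$ with eigenvalues $\ge e^{-\lambda}$. Logarithms are natural. *)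

From HB Require Import structures.
From mathcomp Require Import all_boot all_order all_algebra all_fingroup.
From mathcomp Require Import mxrepresentation.
From mathcomp Require Import complex.
From mathcomp Require Import all_classical all_reals.
From mathcomp Require Import ereal.
From mathcomp.analysis Require Import sequences exp.

Set Implicit Arguments.
Unset Strict Implicit.
Unset Printing Implicit Defensive.

Import Order.TTheory GRing.Theory Num.Theory.
Local Open Scope ring_scope.

Section QDefs.
Variable R : realType.
Local Notation C := R[i].

Definition adjmx {m n : nat} (A : 'M[C]_(m, n)) : 'M[C]_(n, m) :=
  (map_mx (@Num.conj C) A)^T.

Definition unitary {n : nat} (U : 'M[C]_n) : Prop :=
  U *m adjmx U = 1%:M /\ adjmx U *m U = 1%:M.

Definition psd {n : nat} (A : 'M[C]_n) : Prop :=
  forall v : 'cV[C]_n, 0 <= (adjmx v *m A *m v) 0 0.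

Definition pure_state {n : nat} (rho : 'M[C]_n) : Prop :=
  exists v : 'cV[C]_n, adjmx v *m v = 1%:M /\ rho = v *m adjmx v.

Definition avf {gT : finGroupType} {G : {group gT}} {n : nat}
  (f : mx_representation C G n) (rho : 'M[C]_n) : 'M[C]_n :=
  (#|G|%:R)^-1 *: \sum_(g in G) (f g *m rho *m adjmx (f g)).

Definition distinguishable {gT : finGroupType} {G : {group gT}} {n : nat}
  (f : mx_representation C G n) (rho : 'M[C]_n) (eps : R) (N : nat) : Prop :=
  exists (g : 'I_N -> gT) (Pi : 'I_N -> 'M[C]_n),
    (forall i, g i \in G) /\
    (forall i, psd (Pi i)) /\ \sum_(i < N) Pi i = 1%:M /\
    (N%:R)^-1 * \sum_(i < N)
        \tr (f (g i) *m rho *m adjmx (f (g i)) *m (1%:M - Pi i))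
      <= (eps%:C)%C.

Definition is_M {gT : finGroupType} {G : {group gT}} {n : nat}
  (f : mx_representation C G n) (rho : 'M[C]_n) (eps : R) (M : nat) : Prop :=
  distinguishable f rho eps M /\
  (forall N, distinguishable f rho eps N -> (N <= M)%N).

(* tr sigma {sigma >= c} <= eps, where {sigma >= c} is the projection onto the
   span of eigenvectors of sigma with eigenvalue >= c, computed from a
   spectral decomposition sigma = U^dagger diag(d) U (U unitary, d real). *)
Definition tr_proj_ge_le {n : nat} (sigma : 'M[C]_n) (c eps : R) : Prop :=
  exists (U : 'M[C]_n) (d : 'I_n -> R),
    unitary U /\
    sigma = adjmx U *m diag_mx (\row_i ((d i)%:C)%C) *m U /\
    \tr (sigma *m (adjmx U *m
           diag_mx (\row_i (if c <= d i then 1 else 0)) *m U)) <= (eps%:C)%C.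

(* H_s^eps(sigma) = sup { lambda | tr sigma {sigma >= e^{-lambda}} <= eps },
   valued in the extended reals (sup of empty set = -oo). *)
Definition Hs {n : nat} (eps : R) (sigma : 'M[C]_n) : \bar R :=
  ereal_sup [set (lam%:E)%E | lam in [set lam : R |
                 tr_proj_ge_le sigma (expR (- lam)) eps]].

End QDefs.

(* Diagonalize sigma = av_f[rho] and let P_c be the projection
   onto its eigenvectors with eigenvalue >= c = e^-lambda; H_s only sees the
   tail mass tr (sigma P_c) = sum of the eigenvalues >= c.

   Lower bound (packing): choose orbit vectors f(g) v greedily.  The least
   covered one is covered by the current projection P at most on average,
   i.e. by tr (P sigma) <= tail + c tr P, so adding the rank-one projection onto
   its component orthogonal to P costs error at most tail + c m at step m;
   about d1 d2 / c steps stay within eps.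

   Upper bound (converse): P_c commutes with f, so every orbit vector has
   weight p = tail mass on P_c.  Splitting it along P_c and 1 - P_c with
   |x + y|^2 <= (1 + t)|x|^2 + (1 + 1/t)|y|^2 and summing over a POVM bounds the
   success of N states by (1 + t) tr P_c + N (1 + 1/t) (1 - p), while
   c tr P_c <= p.  If p > eps + d1 + 2 d2, the choice t = 2 / (d1 + 2 d2) and
   AM-GM give N c <= 1 / (d1 d2^2). *)

From HB Require Import structures.
From mathcomp Require Import all_boot all_order all_algebra all_fingroup.
From mathcomp Require Import mxrepresentation.
From mathcomp Require Import complex.
From mathcomp Require Import all_classical all_reals.
From mathcomp Require Import ereal.
From mathcomp.analysis Require Import sequences exp.
From mathcomp Require Import sesquilinear spectral.
From mathcomp Require Import ring lra.

Import Order.TTheory GRing.Theory Num.Theory.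
Local Open Scope ring_scope.
Set Implicit Arguments.
Unset Strict Implicit.
Unset Printing Implicit Defensive.

Definition braket (R : realType) n
    (x : 'cV[R[i]]_n) (A : 'M[R[i]]_n) (y : 'cV[R[i]]_n) : R[i] :=
  (adjmx x *m A *m y) 0 0.

Notation qform A u := (braket u A u).

Section Matrices.
Variable R : realType.
Local Notation C := R[i].

Lemma adjmxM m n p (A : 'M[C]_(m, n)) (B : 'M[C]_(n, p)) :
  adjmx (A *m B) = adjmx B *m adjmx A.
Proof. by rewrite /adjmx map_mxM trmx_mul. Qed.

Lemma adjmxK m n (A : 'M[C]_(m, n)) : adjmx (adjmx A) = A.
Proof. by apply/matrixP => i j; rewrite /adjmx !mxE conjCK. Qed.

Lemma adjmxD m n (A B : 'M[C]_(m, n)) : adjmx (A + B) = adjmx A + adjmx B.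
Proof. by apply/matrixP => i j; rewrite /adjmx !mxE rmorphD. Qed.

Lemma adjmxB m n (A B : 'M[C]_(m, n)) : adjmx (A - B) = adjmx A - adjmx B.
Proof. by apply/matrixP => i j; rewrite /adjmx !mxE rmorphB. Qed.

Lemma adjmxZ m n a (A : 'M[C]_(m, n)) : adjmx (a *: A) = a^* *: adjmx A.
Proof. by apply/matrixP => i j; rewrite /adjmx !mxE rmorphM. Qed.

Lemma adjmx0 m n : adjmx (0 : 'M[C]_(m, n)) = 0.
Proof. by apply/matrixP => i j; rewrite /adjmx !mxE rmorph0. Qed.

Lemma adjmx1 n : adjmx (1%:M : 'M[C]_n) = 1%:M.
Proof.
apply/matrixP => i j; rewrite /adjmx !mxE eq_sym.
by case: eqP; rewrite ?rmorph1 ?rmorph0.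
Qed.

Lemma adjmx_sum m n I (r : seq I) (P : pred I) (F : I -> 'M[C]_(m, n)) :
  adjmx (\sum_(i <- r | P i) F i) = \sum_(i <- r | P i) adjmx (F i).
Proof. by elim/big_rec2: _ => [|i y1 y2 _ <-]; rewrite ?adjmx0 ?adjmxD. Qed.

Lemma adjmx_conj n (U X : 'M[C]_n) :
  adjmx (adjmx U *m X *m U) = adjmx U *m adjmx X *m U.
Proof. by rewrite !adjmxM adjmxK mulmxA. Qed.

Lemma qform_trace n (A : 'M[C]_n) u : qform A u = \tr (A *m (u *m adjmx u)).
Proof. by rewrite mulmxA mxtrace_mulC /braket mulmxA /mxtrace big_ord1. Qed.

Lemma braketDm n (A B : 'M[C]_n) x y :
  braket x (A + B) y = braket x A y + braket x B y.
Proof. by rewrite /braket mulmxDr mulmxDl mxE. Qed.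

Lemma braketBm n (A B : 'M[C]_n) x y :
  braket x (A - B) y = braket x A y - braket x B y.
Proof. by rewrite /braket mulmxBr mulmxBl !mxE. Qed.

Lemma braketZm n a (A : 'M[C]_n) x y : braket x (a *: A) y = a * braket x A y.
Proof. by rewrite /braket -scalemxAr -scalemxAl mxE. Qed.

Lemma braket_summ n I (r : seq I) (P : pred I) (F : I -> 'M[C]_n) x y :
  braket x (\sum_(i <- r | P i) F i) y = \sum_(i <- r | P i) braket x (F i) y.
Proof. by rewrite /braket mulmx_sumr mulmx_suml summxE. Qed.

Lemma braketZl n (A : 'M[C]_n) a x y : braket (a *: x) A y = a^* * braket x A y.
Proof. by rewrite /braket adjmxZ -!scalemxAl mxE. Qed.

Lemma braketZr n (A : 'M[C]_n) a x y : braket x A (a *: y) = a * braket x A y.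
Proof. by rewrite /braket -scalemxAr mxE. Qed.

Lemma qformDv n (A : 'M[C]_n) x y :
  qform A (x + y) = qform A x + qform A y + braket x A y + braket y A x.
Proof. by rewrite /braket adjmxD !mulmxDl !mulmxDr !mxE; ring. Qed.

Lemma conj_qform n (A : 'M[C]_n) u : (qform A u)^* = qform (adjmx A) u.
Proof.
have -> : (qform A u)^* = adjmx (adjmx u *m A *m u) 0 0 by rewrite /braket /adjmx !mxE.
by rewrite !adjmxM adjmxK mulmxA.
Qed.

Lemma qform_conj m n (A : 'M[C]_m) (B : 'M[C]_(m, n)) u :
  qform (adjmx B *m A *m B) u = qform A (B *m u).
Proof. by rewrite /braket adjmxM !mulmxA. Qed.

Lemma braket_delta n (A : 'M[C]_n) i j :
  braket (delta_mx i 0) A (delta_mx j 0) = A i j.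
Proof.
rewrite /braket; have -> : adjmx (delta_mx i 0 : 'cV[C]_n) = delta_mx 0 i.
  apply/matrixP => a b; rewrite /adjmx !mxE.
  by case: (_ == _); case: (_ == _); rewrite /= ?rmorph1 ?rmorph0.
by rewrite -rowE -colE !mxE.
Qed.

Lemma qform1 n (u : 'cV[C]_n) : qform 1%:M u = \sum_i (u i 0)^* * u i 0.
Proof. by rewrite /braket mulmx1 !mxE; apply: eq_bigr => i _; rewrite !mxE. Qed.

Lemma qform1_ge0 n (u : 'cV[C]_n) : 0 <= qform 1%:M u.
Proof. by rewrite qform1; apply: sumr_ge0 => i _; rewrite mulrC mul_conjC_ge0. Qed.

Lemma unitary_qform1 n (U : 'M[C]_n) u :
  unitary U -> qform 1%:M (U *m u) = qform 1%:M u.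
Proof. by case=> _ UU; rewrite -qform_conj mulmx1 UU. Qed.

Lemma psdD n (A B : 'M[C]_n) : psd A -> psd B -> psd (A + B).
Proof.
by move=> pA pB u; change (0 <= qform (A + B) u); rewrite braketDm addr_ge0 ?pA ?pB.
Qed.

Lemma psdZ n a (A : 'M[C]_n) : 0 <= a -> psd A -> psd (a *: A).
Proof.
by move=> a0 pA u; change (0 <= qform (a *: A) u); rewrite braketZm mulr_ge0 ?pA.
Qed.

Lemma psd_sum n I (r : seq I) (P : pred I) (F : I -> 'M[C]_n) :
  (forall i, P i -> psd (F i)) -> psd (\sum_(i <- r | P i) F i).
Proof.
move=> pF u; change (0 <= qform (\sum_(i <- r | P i) F i) u).
by rewrite braket_summ; apply: sumr_ge0 => i /pF; apply.
Qed.

Lemma psd_conj m n (A : 'M[C]_m) (B : 'M[C]_(m, n)) :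
  psd A -> psd (adjmx B *m A *m B).
Proof.
by move=> pA u; change (0 <= qform (adjmx B *m A *m B) u); rewrite qform_conj pA.
Qed.

Lemma psd_outer n (r : 'cV[C]_n) : psd (r *m adjmx r).
Proof.
have -> : r *m adjmx r = adjmx (adjmx r) *m 1%:M *m adjmx r by rewrite adjmxK mulmx1.
by apply: psd_conj => u; apply: qform1_ge0.
Qed.

(* Polarization with u = e_i + e_j and u = e_i + 'i e_j. *)
Lemma qform_eq0 n (B : 'M[C]_n) : (forall u, qform B u = 0) -> B = 0.
Proof.
move=> B0; apply/matrixP => i j; rewrite mxE.
have Bkk k : B k k = 0 by rewrite -braket_delta; apply: B0.
have h1 := B0 (delta_mx i 0 + delta_mx j 0).
rewrite qformDv !braket_delta !Bkk !add0r in h1.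
have h2 := B0 (delta_mx i 0 + 'i *: delta_mx j 0).
rewrite qformDv braketZl braketZr braketZl braketZr !braket_delta !Bkk in h2.
rewrite !mulr0 !add0r conjCi in h2.
have : 2 * 'i * B i j = 0.
  have -> : 2 * 'i * B i j = 'i * (B i j + B j i) + ('i * B i j + - 'i * B j i) by ring.
  by rewrite h1 h2 mulr0 addr0.
by move/eqP; rewrite !mulf_eq0 pnatr_eq0 /= (negbTE (neq0Ci _)) /= => /eqP.
Qed.

(* The defect of this inequality is T^-1 * qform A (T *: x - y) >= 0. *)
Lemma qform_add_le n (A : 'M[C]_n) x y (t : R) : psd A -> 0 < t ->
  qform A (x + y) <= (1 + t%:C%C) * qform A x + (1 + (t%:C%C)^-1) * qform A y.
Proof.
move=> pA t_gt0; set T := t%:C%C.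
have T_gt0 : 0 < T by rewrite ltcR.
have T_real : T^* = T by rewrite geC0_conj // ltW.
have -> : (1 + T) * qform A x + (1 + T^-1) * qform A y =
    qform A (x + y) + T^-1 * qform A (T *: x + (-1) *: y).
  by rewrite !qformDv !braketZl !braketZr T_real rmorphN1; field; rewrite gt_eqF.
by rewrite lerDl mulr_ge0 ?invr_ge0 ?(ltW T_gt0) //; apply: pA.
Qed.

Lemma psd_adjmx n (A : 'M[C]_n) : psd A -> adjmx A = A.
Proof.
move=> pA; apply/eqP; rewrite -subr_eq0; apply/eqP; apply: qform_eq0 => u.
by rewrite braketBm -conj_qform geC0_conj ?subrr //; apply: pA.
Qed.

Definition fdiag_mx n (x : 'I_n -> C) : 'M[C]_n := diag_mx (\row_i x i).

Lemma fdiag_mxM n (x y : 'I_n -> C) :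
  fdiag_mx x *m fdiag_mx y = fdiag_mx (fun k => x k * y k).
Proof.
apply/matrixP => i j; rewrite /fdiag_mx mul_mx_diag !mxE.
by case: eqP => [->|]; rewrite ?mulr1n ?mulr0n ?mul0r.
Qed.

Lemma mxtrace_fdiag n (x : 'I_n -> C) : \tr (fdiag_mx x) = \sum_k x k.
Proof. by rewrite /fdiag_mx mxtrace_diag; apply: eq_bigr => k _; rewrite mxE. Qed.

Lemma adjmx_fdiag n (x : 'I_n -> C) :
  adjmx (fdiag_mx x) = fdiag_mx (fun k => (x k)^*).
Proof.
apply/matrixP => i j; rewrite /adjmx /fdiag_mx !mxE eq_sym.
by case: eqP => [->|]; rewrite ?mulr1n ?mulr0n ?rmorph0.
Qed.

Lemma mul_fdiag_mx n (x : 'I_n -> C) (A : 'M[C]_n) i j :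
  (fdiag_mx x *m A) i j = x i * A i j.
Proof. by rewrite /fdiag_mx mul_diag_mx !mxE. Qed.

Lemma mul_mx_fdiag n (x : 'I_n -> C) (A : 'M[C]_n) i j :
  (A *m fdiag_mx x) i j = A i j * x j.
Proof. by rewrite /fdiag_mx mul_mx_diag !mxE. Qed.

Lemma qform_fdiag n (x : 'I_n -> C) u :
  qform (fdiag_mx x) u = \sum_k x k * ((u k 0)^* * u k 0).
Proof.
rewrite /braket /fdiag_mx mul_mx_diag !mxE.
by apply: eq_bigr => k _; rewrite !mxE mulrCA mulrA.
Qed.

Section UnitaryConj.
Variables (n : nat) (U : 'M[C]_n).
Hypothesis uU : unitary U.

Lemma unitary_conjM X Y :
  (adjmx U *m X *m U) *m (adjmx U *m Y *m U) = adjmx U *m (X *m Y) *m U.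
Proof.
by case: uU => UU _; rewrite !mulmxA -[_ *m X *m U *m adjmx U]mulmxA UU mulmx1.
Qed.

Lemma unitary_conjK X : adjmx U *m (U *m X *m adjmx U) *m U = X.
Proof. by case: uU => _ UU; rewrite !mulmxA UU mul1mx -mulmxA UU mulmx1. Qed.

Lemma unitary_conjVK X : U *m (adjmx U *m X *m U) *m adjmx U = X.
Proof. by case: uU => UU _; rewrite !mulmxA UU mul1mx -!mulmxA UU !mulmx1. Qed.

Lemma unitary_conjI X Y : adjmx U *m X *m U = adjmx U *m Y *m U -> X = Y.
Proof. by move=> XY; rewrite -(unitary_conjVK X) XY unitary_conjVK. Qed.

Lemma mxtrace_unitary_conj X : \tr (adjmx U *m X *m U) = \tr X.
Proof. by case: uU => UU _; rewrite mxtrace_mulC mulmxA UU mul1mx. Qed.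

End UnitaryConj.

Lemma hermitian_spectral n (A : 'M[C]_n) : adjmx A = A ->
  exists (U : 'M[C]_n) (d : 'I_n -> R),
    unitary U /\ A = adjmx U *m diag_mx (\row_i (d i)%:C%C) *m U.
Proof.
move=> AA; have hA : A \is hermsymmx.
  apply/is_hermitianmxP; rewrite expr0 scale1r -{1}AA.
  by apply/matrixP => i j; rewrite !mxE.
have /orthomx_spectralP AE := hermitian_normalmx hA.
have real_d := hermitian_spectral_diag_real hA.
set S := spectralmx A in AE; set sp := spectral_diag A in AE real_d.
have uS : S \is unitarymx by apply: spectral_unitarymx.
have adjS : adjmx S = invmx S.
  by rewrite invmx_unitary //; apply/matrixP => i j; rewrite !mxE.
exists S, (fun i => complex.Re (sp 0 i)); split.
  by rewrite /unitary adjS mulmxV ?mulVmx // unitarymx_unit.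
rewrite {1}AE adjS; congr (_ *m diag_mx _ *m _).
by apply/matrixP => i j; rewrite !mxE ord1 RRe_real //; move/mxOverP: real_d; apply.
Qed.

Lemma qform_le_trace n (A : 'M[C]_n) u :
  psd A -> qform A u <= \tr A * qform 1%:M u.
Proof.
move=> pA; have [U [d [uU AE]]] := hermitian_spectral (psd_adjmx pA).
have d_ge0 k : 0 <= (d k)%:C%C.
  have : 0 <= qform A (adjmx U *m delta_mx k 0) by apply: pA.
  rewrite -qform_conj adjmxK AE (unitary_conjVK uU).
  by rewrite braket_delta mxE eqxx mulr1n mxE.
rewrite AE -(unitary_qform1 _ uU) qform_conj mxtrace_unitary_conj //.
rewrite -[diag_mx _]/(fdiag_mx _) qform_fdiag mxtrace_fdiag qform1 mulr_suml.
apply: ler_sum => k _; apply: ler_wpM2l => //.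
by rewrite (bigD1 k) //= lerDl; apply: sumr_ge0 => j _; rewrite mulrC mul_conjC_ge0.
Qed.

Definition orth_proj n (P : 'M[C]_n) : Prop := adjmx P = P /\ P *m P = P.

Lemma orth_proj_qform n (P : 'M[C]_n) u :
  orth_proj P -> qform P u = qform 1%:M (P *m u).
Proof. by case=> PP PPP; rewrite -qform_conj mulmx1 PP PPP. Qed.

Lemma orth_proj_psd n (P : 'M[C]_n) : orth_proj P -> psd P.
Proof.
by move=> oP u; change (0 <= qform P u); rewrite orth_proj_qform // qform1_ge0.
Qed.

Lemma orth_projC n (P : 'M[C]_n) : orth_proj P -> orth_proj (1%:M - P).
Proof.
case=> PP PPP; split; first by rewrite adjmxB adjmx1 PP.
by rewrite mulmxBl !mulmxBr !mul1mx mulmx1 PPP subrr subr0.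
Qed.

Lemma orth_proj_unitary_conj n (U P : 'M[C]_n) :
  unitary U -> orth_proj P -> orth_proj (U *m P *m adjmx U).
Proof.
move=> [_ UU] [PP PPP]; split; first by rewrite !adjmxM adjmxK PP mulmxA.
by rewrite -!mulmxA [adjmx U *m _]mulmxA UU mul1mx [P *m (P *m _)]mulmxA PPP !mulmxA.
Qed.

(* P k k = \sum_j |P k j|^2 >= (P k k)^2, as P = P *m adjmx P. *)
Lemma orth_proj_diag n (P : 'M[C]_n) k : orth_proj P -> 0 <= P k k <= 1.
Proof.
case=> PP PPP.
have PkkE : P k k = \sum_j P k j * (P k j)^*.
  by rewrite -{1}PPP mxE; apply: eq_bigr => j _; rewrite -{2}PP /adjmx !mxE.
have Pkk_ge0 : 0 <= P k k by rewrite PkkE sumr_ge0 // => j _; apply: mul_conjC_ge0.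
have : P k k * (P k k)^* <= P k k.
  rewrite [X in _ <= X]PkkE (bigD1 k) //= lerDl.
  by apply: sumr_ge0 => j _; apply: mul_conjC_ge0.
rewrite Pkk_ge0 geC0_conj //= => Pkk_sq_le.
have [->|Pkk_neq0] := eqVneq (P k k) 0; first by rewrite ler01.
have Pkk_gt0 : 0 < P k k by rewrite lt_def Pkk_neq0.
by rewrite -subr_ge0 -(pmulr_rge0 _ Pkk_gt0) mulrBr mulr1 subr_ge0.
Qed.

Lemma qform_outer n (r x : 'cV[C]_n) :
  qform (r *m adjmx r) x = (braket r 1%:M x)^* * braket r 1%:M x.
Proof.
rewrite /braket mulmx1.
have -> : adjmx x *m (r *m adjmx r) *m x = adjmx (adjmx r *m x) *m (adjmx r *m x).
  by rewrite adjmxM adjmxK !mulmxA.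
by move: (adjmx r *m x) => s; rewrite mxE big_ord1 /adjmx !mxE.
Qed.

(* Q is the projection onto the normalised component of u orthogonal to the
   range of P (and Q = 0 if there is none). *)
Lemma orth_proj_add_rank1 n (P : 'M[C]_n) u : orth_proj P -> qform 1%:M u = 1 ->
  exists Q, [/\ psd Q, orth_proj (P + Q), \tr Q <= 1 & 1 - qform Q u = qform P u].
Proof.
move=> oP u1; have [PP PPP] := oP.
set r := (1%:M - P) *m u; set t := qform 1%:M r.
have t_ge0 : 0 <= t by apply: qform1_ge0.
have tE : t = 1 - qform P u.
  by rewrite /t -orth_proj_qform ?braketBm ?u1 //; apply: orth_projC.
have rtu : braket r 1%:M u = t.
  rewrite /t -orth_proj_qform; last exact: orth_projC.
  by rewrite /braket mulmx1 /r adjmxM adjmxB adjmx1 PP.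
have Pr : P *m r = 0 by rewrite /r mulmxA mulmxBr mulmx1 PPP subrr mul0mx.
have rP : adjmx r *m P = 0 by rewrite -PP -adjmxM Pr adjmx0.
have rr : adjmx r *m r = t%:M by rewrite [LHS]mx11_scalar /t /braket mulmx1.
have tVVt : t^-1 * t^-1 * t = t^-1.
  by have [->|t_neq0] := eqVneq t 0; rewrite ?invr0 ?mulr0 // -mulrA mulVf ?mulr1.
clearbody r t; exists (t^-1 *: (r *m adjmx r)); split.
- by apply: psdZ; [rewrite invr_ge0 | apply: psd_outer].
- split.
    have tV_real : (t^-1)^* = t^-1 by rewrite geC0_conj // invr_ge0.
    by rewrite adjmxD PP adjmxZ tV_real adjmxM adjmxK.
  rewrite mulmxDl !mulmxDr PPP -!scalemxAl -!scalemxAr !mulmxA Pr mul0mx.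
  rewrite -(mulmxA r (adjmx r) P) rP mulmx0 !scaler0 addr0 add0r.
  by rewrite -(mulmxA r (adjmx r) r) rr mul_mx_scalar -scalemxAl !scalerA mulrA tVVt.
- rewrite mxtraceZ mxtrace_mulC rr mxtrace_scalar mulr1n.
  by have [->|t_neq0] := eqVneq t 0; rewrite ?invr0 ?mul0r ?ler01 ?mulVf.
- rewrite braketZm qform_outer rtu geC0_conj //.
  have [t0|t_neq0] := eqVneq t 0.
    by move: tE; rewrite t0 invr0 mul0r subr0 => /eqP; rewrite eq_sym subr_eq0 => /eqP.
  by rewrite mulrA mulVf // mul1r tE opprB addrC subrK.
Qed.

Definition spectral_proj n (U : 'M[C]_n) (d : 'I_n -> R) (c : R) : 'M[C]_n :=
  adjmx U *m diag_mx (\row_i (if c <= d i then 1 else 0)) *m U.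

Definition tail_mass n (d : 'I_n -> R) (c : R) : R := \sum_(k | c <= d k) d k.

Lemma tail_mass_ge0 n (d : 'I_n -> R) c : 0 <= c -> 0 <= tail_mass d c.
Proof. by move=> c_ge0; apply: sumr_ge0 => k /(le_trans c_ge0). Qed.

Lemma tail_mass_ge_count n (d : 'I_n -> R) c :
  c * #|[pred k | c <= d k]|%:R <= tail_mass d c.
Proof.
by rewrite -sum1_card natr_sum mulr_sumr; apply: ler_sum => k; rewrite mulr1.
Qed.

Section SpectralDecomposition.
Variables (n : nat) (A U : 'M[C]_n) (d : 'I_n -> R).
Hypotheses (uU : unitary U)
  (AE : A = adjmx U *m diag_mx (\row_i (d i)%:C%C) *m U).

Local Notation ind c := (fun k => if c <= d k then 1 else 0 : C).

Lemma spectral_projE c : spectral_proj U d c = adjmx U *m fdiag_mx (ind c) *m U.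
Proof. by []. Qed.

Lemma orth_proj_spectral_proj c : orth_proj (spectral_proj U d c).
Proof.
rewrite spectral_projE; split.
  rewrite adjmx_conj adjmx_fdiag; congr (_ *m fdiag_mx _ *m _); apply/funext => k.
  by case: ifP; rewrite ?rmorph1 ?rmorph0.
rewrite unitary_conjM // fdiag_mxM; congr (_ *m fdiag_mx _ *m _); apply/funext => k.
by case: ifP; rewrite ?mulr1 ?mulr0.
Qed.

Lemma mxtrace_spectral_proj c :
  \tr (spectral_proj U d c) = #|[pred k | c <= d k]|%:R.
Proof.
rewrite spectral_projE mxtrace_unitary_conj // mxtrace_fdiag.
rewrite -sum1_card natr_sum [RHS]big_mkcond; apply: eq_bigr => k _.
by rewrite inE.
Qed.

Lemma mxtrace_mul_spectral_proj c :
  \tr (A *m spectral_proj U d c) = (tail_mass d c)%:C%C.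
Proof.
rewrite AE spectral_projE -[diag_mx _]/(fdiag_mx _) unitary_conjM //.
rewrite mxtrace_unitary_conj // fdiag_mxM mxtrace_fdiag.
rewrite /tail_mass rmorph_sum [RHS]big_mkcond.
by apply: eq_bigr => k _; case: ifP; rewrite ?mulr1 ?mulr0.
Qed.

(* Diagonal entries of a projection lie in [0, 1], so in the eigenbasis of A
   each eigenvalue d k contributes at most d k if c <= d k, and less than c
   times the k-th diagonal entry of P otherwise. *)
Lemma mxtrace_orth_proj_mul_le (P : 'M[C]_n) c : orth_proj P -> 0 <= c ->
  \tr (P *m A) <= (tail_mass d c)%:C%C + c%:C%C * \tr P.
Proof.
move=> oP c_ge0; set P' := U *m P *m adjmx U.
have oP' : orth_proj P' by apply: orth_proj_unitary_conj.
rewrite -(unitary_conjK uU P) -/P' AE -[diag_mx _]/(fdiag_mx _) unitary_conjM //.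
rewrite !mxtrace_unitary_conj // /tail_mass big_mkcond rmorph_sum /mxtrace.
rewrite mulr_sumr -big_split /=; apply: ler_sum => k _.
rewrite mul_mx_fdiag; have /andP[P'_ge0 P'_le1] := orth_proj_diag k oP'.
case: ifP => [c_le_d | /negbT]; last first.
  by rewrite -ltNge add0r mulrC => /ltW d_le_c; rewrite ler_wpM2r // lecR.
have d_ge0 : 0 <= (d k)%:C%C by rewrite lecR (le_trans c_ge0).
by rewrite -[X in X <= _]addr0 lerD ?mulr_ge0 ?lecR // ler_piMl.
Qed.

(* W commutes with the diagonal matrix of eigenvalues, hence with any function
   of it, in particular with the indicator of the eigenvalues >= c. *)
Lemma spectral_proj_comm (W : 'M[C]_n) c :
  W *m A = A *m W -> W *m spectral_proj U d c = spectral_proj U d c *m W.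
Proof.
move=> WA; set W' := U *m W *m adjmx U.
have WE : W = adjmx U *m W' *m U by rewrite unitary_conjK.
clearbody W'; subst W.
have DW : fdiag_mx (fun k => (d k)%:C%C) *m W' = W' *m fdiag_mx (fun k => (d k)%:C%C).
  apply: (unitary_conjI uU); rewrite -!(unitary_conjM uU).
  by move: WA; rewrite AE.
rewrite spectral_projE !(unitary_conjM uU); congr (_ *m _ *m _).
apply/matrixP => i j; move/matrixP: DW => /(_ i j).
rewrite mul_fdiag_mx mul_mx_fdiag mul_fdiag_mx mul_mx_fdiag /=.
have [->|W'_neq0] := eqVneq (W' i j) 0; first by rewrite !mulr0 !mul0r.
rewrite [_ * (d j)%:C%C]mulrC => /(mulIf W'_neq0)/complexI ->.
exact: mulrC.
Qed.

End SpectralDecomposition.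

Lemma tr_proj_ge_leP n (A : 'M[C]_n) c e :
  tr_proj_ge_le A c e <-> exists U d, [/\ unitary U,
    A = adjmx U *m diag_mx (\row_i (d i)%:C%C) *m U & tail_mass d c <= e].
Proof.
split=> [[U [d [uU [AE tr_le]]]] | [U [d [uU AE tail_le]]]]; exists U, d.
  by split=> //; rewrite -lecR -(mxtrace_mul_spectral_proj uU AE).
by do 2 split=> //; rewrite (mxtrace_mul_spectral_proj uU AE) lecR.
Qed.

End Matrices.

Section Arithmetic.
Variable R : realType.

Lemma amgm3 (a b : R) : 0 <= a -> 0 <= b -> 27 * (a * b ^+ 2) <= (a + 2 * b) ^+ 3.
Proof.
move=> a_ge0 b_ge0.
have -> : (a + 2 * b) ^+ 3 = 27 * (a * b ^+ 2) + (a - b) ^+ 2 * (a + 8 * b) by ring.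
by rewrite lerDl mulr_ge0 ?sqr_ge0 //; lra.
Qed.

Lemma success_bound_arith (eps d1 d2 p c r N : R) :
  0 < eps -> 0 < d1 -> 0 < d2 -> 0 < c -> 0 <= N -> c * r <= p -> p <= 1 ->
  eps + d1 + 2 * d2 < p ->
  N * (1 - eps) <=
    (1 + 2 / (d1 + 2 * d2)) * r + (1 + (d1 + 2 * d2) / 2) * N * (1 - p) ->
  N * c <= 1 / (d1 * d2 ^+ 2).
Proof.
move=> eps_gt0 d1_gt0 d2_gt0 c_gt0 N_ge0 cr_le p_le1 p_gt.
have amgm := amgm3 (ltW d1_gt0) (ltW d2_gt0); rewrite -addrA in p_gt.
set s := d1 + 2 * d2 in p_gt amgm *; move=> success.
have s_gt0 : 0 < s by rewrite /s; lra.
have Ns_le : N * s / 2 <= (1 + 2 / s) * r.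
  have : 0 <= N * (p - eps - s + s / 2 * p) by rewrite mulr_ge0 //; nra.
  by lra.
have Ncs_le : N * c * s ^+ 2 <= 2 * (s + 2).
  have : 2 * s * c * (N * s / 2) <= 2 * s * c * ((1 + 2 / s) * r).
    by apply: ler_wpM2l => //; nra.
  have -> : 2 * s * c * ((1 + 2 / s) * r) = 2 * (s + 2) * (c * r).
    by field; rewrite gt_eqF.
  have -> : 2 * s * c * (N * s / 2) = N * c * s ^+ 2 by field.
  by nra.
set D := d1 * d2 ^+ 2 in amgm *; have D_gt0 : 0 < D by rewrite mulr_gt0 ?exprn_gt0.
have : 27 * (N * c * D) <= 2 * (s + 2) * s.
  rewrite -(ler_pM2r (_ : 0 < s ^+ 2)) ?exprn_gt0 //.
  have Nc_ge0 : 0 <= N * c by rewrite mulr_ge0 // ltW.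
  have : 0 <= (N * c * s ^+ 2) * (s ^+ 3 - 27 * D).
    by apply: mulr_ge0; [apply: mulr_ge0 Nc_ge0 (sqr_ge0 s) | rewrite subr_ge0].
  have : 0 <= s ^+ 3 * (2 * (s + 2) - N * c * s ^+ 2).
    by apply: mulr_ge0; [apply/exprn_ge0/ltW | rewrite subr_ge0].
  by nra.
by rewrite ler_pdivlMr //; nra.
Qed.

End Arithmetic.

Lemma is_M_gt0 (R : realType) (gT : finGroupType) (G : {group gT}) n
    (f : mx_representation R[i] G n) (rho : 'M[R[i]]_n) eps M :
  0 < eps -> is_M f rho eps M -> (0 < M)%N.
Proof.
move=> eps_gt0 [_ M_max]; apply: M_max.
exists (fun=> 1%g), (fun=> 1%:M); do !split=> //.
- by move=> i u; apply: qform1_ge0.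
- by rewrite big_ord1.
- by rewrite big1 ?mulr0 ?lecR ?ltW // => i _; rewrite subrr mulmx0 mxtrace0.
Qed.

Section Orbit.
Variable R : realType.
Local Notation C := R[i].
Variables (gT : finGroupType) (G : {group gT}) (n : nat).
Variable f : mx_representation C G n.
Hypothesis f_unitary : forall g, g \in G -> unitary (f g).
Variable v : 'cV[C]_n.
Hypothesis v_unit : adjmx v *m v = 1%:M.
Local Notation rho := (v *m adjmx v).
Local Notation sigma := (avf f rho).

Lemma qform1_orbit g : g \in G -> qform 1%:M (f g *m v) = 1.
Proof.
by move=> gG; rewrite (unitary_qform1 _ (f_unitary gG)) /braket mulmx1 v_unit mxE.
Qed.

Lemma mxtrace_orbit_state g X :
  \tr (f g *m rho *m adjmx (f g) *m X) = qform X (f g *m v).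
Proof. by rewrite qform_trace mxtrace_mulC adjmxM !mulmxA. Qed.

Lemma avf_mxtrace X :
  (#|G|%:R)^-1 * \sum_(g in G) qform X (f g *m v) = \tr (X *m sigma).
Proof.
rewrite /avf -scalemxAr mxtraceZ mulmx_sumr raddf_sum; congr (_ * _).
by apply: eq_bigr => g _; rewrite -mxtrace_orbit_state mxtrace_mulC.
Qed.

Lemma avf_adjmx : adjmx sigma = sigma.
Proof.
rewrite /avf adjmxZ geC0_conj ?invr_ge0 ?ler0n // adjmx_sum.
by congr (_ *: _); apply: eq_bigr => g _; rewrite !adjmxM !adjmxK !mulmxA.
Qed.

Lemma avf_comm h : h \in G -> f h *m sigma = sigma *m f h.
Proof.
move=> hG; have [_ Ufh] := f_unitary hG.
suff conj_sigma : f h *m sigma *m adjmx (f h) = sigma.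
  by rewrite -{2}conj_sigma -[_ *m adjmx (f h) *m f h]mulmxA Ufh mulmx1.
rewrite /avf -scalemxAr -scalemxAl mulmx_sumr mulmx_suml; congr (_ *: _).
rewrite [RHS](reindex_inj (mulgI h)) /= [RHS](eq_bigl (mem G)) => [|g]; last first.
  by rewrite /= groupMl.
by apply: eq_bigr => g gG; rewrite repr_mxM // adjmxM !mulmxA.
Qed.

Lemma exists_orbit_qform_le X : psd X ->
  exists2 g, g \in G & qform X (f g *m v) <= \tr (X *m sigma).
Proof.
move=> pX; pose F g := complex.Re (qform X (f g *m v)).
have [g gG F_min] := @arg_minP _ _ _ 1%g (mem G) F (group1 G).
have FE h : qform X (f h *m v) = (F h)%:C%C.
  by rewrite RRe_real // ger0_real //; apply: pX.
exists g => //; rewrite -avf_mxtrace.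
have G_neq0 : (#|G|%:R : C) != 0 by rewrite pnatr_eq0 -lt0n cardG_gt0.
rewrite -[qform X _](mulKf G_neq0); apply: ler_wpM2l; first by rewrite invr_ge0 ler0n.
rewrite mulr_natl -sumr_const; apply: ler_sum => h hG.
by rewrite !FE lecR; apply: F_min.
Qed.

Section SigmaSpectral.
Variables (U : 'M[C]_n) (d : 'I_n -> R).
Hypotheses (uU : unitary U)
  (sigmaE : sigma = adjmx U *m diag_mx (\row_i (d i)%:C%C) *m U).

(* The spectral projection commutes with the representation, so its
   expectation is constant along the orbit of v, hence equal to its average
   tr (sigma P). *)
Lemma orbit_qform_spectral_proj c g : g \in G ->
  qform (spectral_proj U d c) (f g *m v) = (tail_mass d c)%:C%C.
Proof.
set P := spectral_proj U d c.
have PfP h : h \in G -> qform P (f h *m v) = qform P v.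
  move=> hG; have [_ Ufh] := f_unitary hG.
  rewrite -qform_conj -mulmxA -(spectral_proj_comm uU sigmaE c (avf_comm hG)).
  by rewrite mulmxA Ufh mul1mx.
move=> gG; rewrite PfP //; have := avf_mxtrace P.
rewrite (eq_bigr _ PfP) sumr_const -[X in _ * X]mulr_natl mulKf; last first.
  by rewrite pnatr_eq0 -lt0n cardG_gt0.
by move=> ->; rewrite mxtrace_mulC mxtrace_mul_spectral_proj.
Qed.

Lemma tail_mass_le1 c : tail_mass d c <= 1.
Proof.
have oP := orth_proj_spectral_proj d uU c.
have : 0 <= qform (1%:M - spectral_proj U d c) (f 1%g *m v).
  by apply: (orth_proj_psd (orth_projC oP)).
rewrite braketBm qform1_orbit ?group1 // orbit_qform_spectral_proj ?group1 //.
by rewrite subr_ge0 -lecR rmorph1.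
Qed.

Section Packing.
Variables (c e : R).
Hypotheses (c_ge0 : 0 <= c) (tail_le : tail_mass d c <= e).

(* Pick the orbit vector least covered by P (at most its average coverage
   tr (P sigma)) and add the projection onto its part orthogonal to P. *)
Lemma greedy_step (P : 'M[C]_n) m : orth_proj P -> \tr P <= m%:R ->
  exists g Q, [/\ g \in G, psd Q, orth_proj (P + Q), \tr Q <= 1 &
    1 - qform Q (f g *m v) <= (e + c * m%:R)%:C%C].
Proof.
move=> oP trP; have [g gG Pg_le] := exists_orbit_qform_le (orth_proj_psd oP).
have [Q [pQ oPQ trQ errQ]] := orth_proj_add_rank1 oP (qform1_orbit gG).
exists g, Q; split=> //; rewrite errQ; apply: le_trans Pg_le _.
apply: le_trans (mxtrace_orth_proj_mul_le uU sigmaE oP c_ge0) _.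
by rewrite rmorphD rmorphM rmorph_nat lerD ?lecR // ler_wpM2l ?lecR.
Qed.

Lemma greedy_packing m : exists (gs : nat -> gT) (Ps : nat -> 'M[C]_n),
  [/\ forall k, (k < m)%N -> [/\ gs k \in G, psd (Ps k) &
        1 - qform (Ps k) (f (gs k) *m v) <= (e + c * k%:R)%:C%C],
      orth_proj (\sum_(k < m) Ps k) & \tr (\sum_(k < m) Ps k) <= m%:R].
Proof.
elim: m => [|m [gs [Ps [okPs oP trP]]]].
  exists (fun=> 1%g), (fun=> 0); split=> //; rewrite big_ord0 ?mxtrace0 //.
  by split; rewrite ?adjmx0 ?mulmx0.
have [g [Q [gG pQ oPQ trQ errQ]]] := greedy_step oP trP.
exists (fun k => if k == m then g else gs k), (fun k => if k == m then Q else Ps k).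
have sumE : \sum_(k < m.+1) (if (k : nat) == m then Q else Ps k) =
    \sum_(k < m) Ps k + Q.
  rewrite big_ord_recr /= eqxx; congr (_ + _).
  by apply: eq_bigr => k _; rewrite ltn_eqF.
split; rewrite ?sumE // ?mxtraceD ?mulrSr ?lerD // => k.
by rewrite ltnS leq_eqVlt; case: eqVneq => [-> // | _ /okPs].
Qed.

Lemma packing_distinguishable N eps : (0 < N)%N -> e + c * (N%:R - 1) <= eps ->
  distinguishable f rho eps N.
Proof.
move=> N_gt0 err_le; have [gs [Ps [okPs oP _]]] := greedy_packing N.
set P := \sum_(k < N) Ps k in oP.
have N_neq0 : (N%:R : C) != 0 by rewrite pnatr_eq0 -lt0n.
exists (fun i : 'I_N => gs i), (fun i : 'I_N => Ps i + N%:R^-1 *: (1%:M - P)).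
split; [by move=> i; have [] := okPs i (ltn_ord i) | split; [|split]].
- move=> i; have [_ pPs _] := okPs i (ltn_ord i); apply: psdD => //.
  by apply: psdZ; [rewrite invr_ge0 ler0n | apply/orth_proj_psd/orth_projC].
- rewrite big_split /= -/P sumr_const card_ord -scaler_nat scalerA mulfV //.
  by rewrite scale1r addrC subrK.
apply: (@le_trans _ _ (N%:R^-1 * \sum_(i < N) (e + c * (N%:R - 1))%:C%C)).
  apply: ler_wpM2l; first by rewrite invr_ge0 ler0n.
  apply: ler_sum => i _; have [gG _ err] := okPs i (ltn_ord i).
  rewrite mxtrace_orbit_state braketBm braketDm braketZm qform1_orbit // opprD addrA.
  apply: (@le_trans _ _ (1 - qform (Ps i) (f (gs i) *m v))).
    by rewrite gerBl mulr_ge0 ?invr_ge0 ?ler0n //; apply/orth_proj_psd/orth_projC.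
  apply: le_trans err _; rewrite lecR lerD2l; apply: ler_wpM2l => //.
  by rewrite lerBrDr natr1 ler_nat.
by rewrite sumr_const card_ord -[X in _ * X]mulr_natl mulKf // lecR.
Qed.

End Packing.

(* Split the orbit vector along P and 1 - P: the P-part is controlled by
   tr (P Q P), the (1 - P)-part has squared norm 1 - tail_mass d c. *)
Lemma orbit_qform_split_le c t (Q : 'M[C]_n) g :
  g \in G -> 0 < t -> psd Q -> psd (1%:M - Q) ->
  qform Q (f g *m v) <=
    (1 + t%:C%C) * \tr (adjmx (spectral_proj U d c) *m Q *m spectral_proj U d c)
    + (1 + (t%:C%C)^-1) * (1 - (tail_mass d c)%:C%C).
Proof.
move=> gG t_gt0 pQ pQ1; set P := spectral_proj U d c; set u := f g *m v.
have oP : orth_proj P by apply: orth_proj_spectral_proj.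
have -> : u = P *m u + (1%:M - P) *m u by rewrite mulmxBl mul1mx addrC subrK.
apply: le_trans (qform_add_le _ _ pQ t_gt0) _.
have t_ge0 : 0 <= t%:C%C by rewrite lecR ltW.
apply: lerD; apply: ler_wpM2l; rewrite ?addr_ge0 ?invr_ge0 //.
  rewrite -qform_conj; apply: le_trans (qform_le_trace _ (psd_conj _ pQ)) _.
  by rewrite qform1_orbit // mulr1.
apply: (@le_trans _ _ (qform 1%:M ((1%:M - P) *m u))).
  by rewrite -subr_ge0 -braketBm; apply: pQ1.
rewrite -orth_proj_qform; last exact: orth_projC.
by rewrite braketBm qform1_orbit // orbit_qform_spectral_proj.
Qed.

Lemma distinguishable_success_le eps N c t : (0 < N)%N ->
  distinguishable f rho eps N -> 0 < t ->
  N%:R * (1 - eps) <=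
    (1 + t) * #|[pred k | c <= d k]|%:R + (1 + t^-1) * N%:R * (1 - tail_mass d c).
Proof.
move=> N_gt0 [gi [Pi [giG [psdPi [sumPi err]]]]] t_gt0.
set P := spectral_proj U d c; set p := tail_mass d c.
have oP : orth_proj P by apply: orth_proj_spectral_proj.
have psd1Pi i : psd (1%:M - Pi i).
  by rewrite -sumPi (bigD1 i) //= [Pi i + _]addrC addrK; apply: psd_sum.
have sum_tr : \sum_(i < N) \tr (adjmx P *m Pi i *m P) = #|[pred k | c <= d k]|%:R.
  rewrite -raddf_sum -mulmx_suml -mulmx_sumr sumPi mulmx1 oP.1 oP.2.
  exact: mxtrace_spectral_proj.
have succ_sum : \sum_(i < N) qform (Pi i) (f (gi i) *m v) <=
    (1 + t%:C%C) * #|[pred k | c <= d k]|%:R + (1 + (t%:C%C)^-1) * N%:R * (1 - p%:C%C).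
  apply: le_trans (ler_sum _ (fun i _ =>
    orbit_qform_split_le c (giG i) t_gt0 (psdPi i) (psd1Pi i))) _.
  by rewrite big_split /= -mulr_sumr sum_tr sumr_const card_ord -mulrA mulrCA mulr_natl.
have fail_sum : N%:R - \sum_(i < N) qform (Pi i) (f (gi i) *m v) <= N%:R * eps%:C%C.
  have NV_gt0 : (0 : C) < N%:R^-1 by rewrite invr_gt0 ltr0n.
  rewrite -(ler_pM2l NV_gt0) mulKf ?pnatr_eq0 -?lt0n //; apply: le_trans err.
  rewrite le_eqVlt; apply/orP; left; apply/eqP; congr (_ * _).
  have -> : (N%:R : C) = \sum_(i < N) 1 by rewrite sumr_const card_ord.
  rewrite -sumrB.
  by apply: eq_bigr => i _; rewrite mxtrace_orbit_state braketBm qform1_orbit.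
have key : N%:R * (1 - eps%:C%C) <= (1 + t%:C%C) * #|[pred k | c <= d k]|%:R +
    (1 + (t%:C%C)^-1) * N%:R * (1 - p%:C%C).
  apply: le_trans succ_sum.
  by rewrite mulrBr mulr1 lerBlDr; move: fail_sum; rewrite lerBlDr addrC.
rewrite -lecR; move: key.
by rewrite !(rmorphB, rmorphD, rmorphM, rmorph1, fmorphV, rmorph_nat); apply.
Qed.

Lemma distinguishable_count_le eps d1 d2 N c :
  0 < eps -> 0 < d1 -> 0 < d2 -> (0 < N)%N -> distinguishable f rho eps N ->
  0 < c -> eps + d1 + 2 * d2 < tail_mass d c ->
  N%:R * c <= 1 / (d1 * d2 ^+ 2).
Proof.
move=> eps_gt0 d1_gt0 d2_gt0 N_gt0 dist c_gt0 tail_gt.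
have t_gt0 : 0 < 2 / (d1 + 2 * d2) by rewrite divr_gt0 //; lra.
have := distinguishable_success_le c N_gt0 dist t_gt0; rewrite invf_div.
apply: success_bound_arith eps_gt0 d1_gt0 d2_gt0 c_gt0 (ler0n _ _) _ _ tail_gt.
  exact: tail_mass_ge_count.
exact: tail_mass_le1.
Qed.

End SigmaSpectral.

Lemma ln_lower_bound eps d1 d2 lam M : eps < 1 -> 0 < d1 -> 0 < d2 ->
  is_M f rho eps M -> tr_proj_ge_le sigma (expR (- lam)) (eps - d1 - d2) ->
  lam - ln (1 / (d1 * d2)) <= ln M%:R.
Proof.
move=> eps_lt1 d1_gt0 d2_gt0 [_ M_max] /tr_proj_ge_leP [U [d [uU sigmaE tail_le]]].
set c := expR (- lam); have c_gt0 : 0 < c by apply: expR_gt0.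
have d1_le1 : d1 <= 1 by have := tail_mass_ge0 d (ltW c_gt0); lra.
have x_gt0 : 0 < d1 * d2 / c by rewrite divr_gt0 ?mulr_gt0.
set N := (Num.truncn (d1 * d2 / c)).+1.
have N_le_M : (N <= M)%N.
  apply/M_max/(packing_distinguishable uU sigmaE (ltW c_gt0) tail_le) => //.
  have : c * (N%:R - 1) <= d1 * d2.
    by rewrite /N mulrSr addrK -ler_pdivlMl // [c^-1 * _]mulrC truncn_le ltW.
  by nra.
have N_gt : d1 * d2 / c < N%:R by apply: truncnS_gt.
have lnx : ln (d1 * d2 / c) = lam - ln (1 / (d1 * d2)).
  rewrite lnM ?posrE ?mulr_gt0 ?invr_gt0 // lnV ?posrE // expRK.
  by rewrite div1r lnV ?posrE ?mulr_gt0 // opprK opprK addrC.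
rewrite -lnx; apply: le_trans (_ : ln N%:R <= _).
  by rewrite ler_ln ?posrE ?ltr0n //; apply: ltW.
by rewrite ler_ln ?posrE ?ltr0n ?ler_nat // (leq_trans _ N_le_M).
Qed.

Lemma ln_upper_bound eps d1 d2 lam M :
  0 < eps -> 0 < d1 -> 0 < d2 -> is_M f rho eps M ->
  lam < ln M%:R - ln (1 / (d1 * d2 ^+ 2)) ->
  tr_proj_ge_le sigma (expR (- lam)) (eps + d1 + 2 * d2).
Proof.
move=> eps_gt0 d1_gt0 d2_gt0 HM lam_lt; have M_gt0 := is_M_gt0 eps_gt0 HM.
have [U [d [uU sigmaE]]] := hermitian_spectral avf_adjmx.
apply/tr_proj_ge_leP; exists U, d; split=> //; rewrite leNgt; apply/negP => tail_gt.
have := distinguishable_count_le uU sigmaE eps_gt0 d1_gt0 d2_gt0 M_gt0 HM.1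
  (expR_gt0 _) tail_gt.
have D_gt0 : 0 < d1 * d2 ^+ 2 by rewrite mulr_gt0 ?exprn_gt0.
rewrite -ler_ln ?posrE ?mulr_gt0 ?expR_gt0 ?invr_gt0 ?ltr0n //.
by rewrite lnM ?posrE ?ltr0n ?expR_gt0 // expRK; lra.
Qed.

End Orbit.

Theorem mainTheorem6 (R : realType) (gT : finGroupType) (G : {group gT})
  (n : nat) (f : mx_representation R[i] G n)
  (f_unitary : forall g, g \in G -> unitary (f g))
  (rho : 'M[R[i]]_n) (rho_pure : pure_state rho)
  (eps d1 d2 : R) (eps_gt0 : 0 < eps) (eps_lt1 : eps < 1)
  (d1_gt0 : 0 < d1) (d2_gt0 : 0 < d2)
  (M : nat) (HM : is_M f rho eps M) :
  (Hs (eps - d1 - d2) (avf f rho) - (ln (1 / (d1 * d2)))%:E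
     <= (ln M%:R)%:E)%E /\
  ((ln M%:R)%:E
     <= Hs (eps + d1 + 2 * d2) (avf f rho) + (ln (1 / (d1 * d2 ^+ 2)))%:E)%E.
Proof.
case: rho_pure HM => v [v_unit ->] HM; split.
  rewrite leeBlDr // -EFinD; apply: ge_ereal_sup => _ [lam lam_ok <-].
  by rewrite lee_fin -lerBlDr; apply: (ln_lower_bound f_unitary v_unit) HM lam_ok.
set L := ln (1 / (d1 * d2 ^+ 2)).
rewrite -leeBlDr // -EFinB; apply/lee_addgt0Pr => eta eta_gt0.
set lam := ln M%:R - L - eta.
have lam_ok :
    tr_proj_ge_le (avf f (v *m adjmx v)) (expR (- lam)) (eps + d1 + 2 * d2).
  by apply: (ln_upper_bound f_unitary v_unit _ _ _ HM) => //; rewrite /lam /L; lra.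
have : (lam%:E <= Hs (eps + d1 + 2 * d2) (avf f (v *m adjmx v)))%E.
  by apply: ereal_sup_ubound; exists lam.
by move=> /(leeD2r eta%:E); rewrite -EFinD /lam subrK.
Qed.
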